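(* Let $Q\in\mathbb{C}^{2d\times2d}$ be symmetric and $F=\mathcal{J}Q$. Then for every $t>0$, $$S=\Big(\bigcap_{0\le s\le t}\operatorname{Ker}\big({\rm Im}\,e^{2isF}\big)\Big)\cap T^*\mathbb{R}^d=\Big(\bigcap_{k=1}^{\infty}\operatorname{Ker}\big[{\rm Im}\,((iF)^k)\big]\Big)\cap T^*\mathbb{R}^d,$$ and for every $X\in S$ and $t\in\mathbb{R}$ one has $e^{2itF}X=e^{-2t\,{\rm Im}\,F}X$; moreover $e^{2t\,{\rm Im}\,F}S=S$.
   Context: $\mathcal{J}=\begin{pmatrix}0&I_d\\-I_d&0\end{pmatrix}$; ${\rm Re}$, ${\rm Im}$ of matrices are entrywise. Singular space: $S=\Big(\bigcap_{j=0}^{2d-1}\operatorname{Ker}\big[{\rm Re}\,F({\rm Im}\,F)^j\big]\Big)\cap T^*\mathbb{R}^d$, where kernels are in $\mathbb{C}^{2d}$ and $T^*\mathbb{R}^d=\mathbb{R}^{2d}\subseteq\mathbb{C}^{2d}$. *)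

(* classical reals; complex n x n matrices encoded as pairs
   (real part, imaginary part) of real matrices nat -> nat -> R, of which only
   the entries with indices < n are meaningful. *)
From Stdlib Require Import Arith Reals ClassicalEpsilon.
Open Scope R_scope.

Definition Mat := nat -> nat -> R.
Definition Vec := nat -> R.

Record CMat := mkCMat { ReM : Mat ; ImM : Mat }.

Fixpoint rsum (n : nat) (f : nat -> R) : R :=
  match n with O => 0 | S m => rsum m f + f m end.

Definition mid : Mat := fun i j => if Nat.eqb i j then 1 else 0.
Definition mzero : Mat := fun _ _ => 0.
Definition madd (A B : Mat) : Mat := fun i j => A i j + B i j.
Definition msub (A B : Mat) : Mat := fun i j => A i j - B i j.
Definition mscal (a : R) (A : Mat) : Mat := fun i j => a * A i j.
Definition mmul (n : nat) (A B : Mat) : Mat :=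
  fun i j => rsum n (fun k => A i k * B k j).
Fixpoint mpow (n : nat) (A : Mat) (k : nat) : Mat :=
  match k with O => mid | S k' => mmul n A (mpow n A k') end.

Definition mapply (n : nat) (A : Mat) (x : Vec) : Vec :=
  fun i => rsum n (fun k => A i k * x k).
Definition veq (n : nat) (x y : Vec) : Prop := forall i, (i < n)%nat -> x i = y i.
(* x in R^n (viewed inside C^n) lies in the kernel of the complex matrix
   with real part A and imaginary part 0, i.e. A x = 0 *)
Definition rker (n : nat) (A : Mat) (x : Vec) : Prop :=
  veq n (mapply n A x) (fun _ => 0).

Definition cofReal (A : Mat) : CMat := mkCMat A mzero.
Definition cid : CMat := cofReal mid.
Definition czero : CMat := cofReal mzero.
Definition cadd (A B : CMat) : CMat :=
  mkCMat (madd (ReM A) (ReM B)) (madd (ImM A) (ImM B)).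
Definition cmul (n : nat) (A B : CMat) : CMat :=
  mkCMat (msub (mmul n (ReM A) (ReM B)) (mmul n (ImM A) (ImM B)))
         (madd (mmul n (ReM A) (ImM B)) (mmul n (ImM A) (ReM B))).
(* multiplication by the complex scalar a + i b *)
Definition cscal (a b : R) (A : CMat) : CMat :=
  mkCMat (msub (mscal a (ReM A)) (mscal b (ImM A)))
         (madd (mscal a (ImM A)) (mscal b (ReM A))).
Fixpoint cpow (n : nat) (A : CMat) (k : nat) : CMat :=
  match k with O => cid | S k' => cmul n A (cpow n A k') end.

Fixpoint cexp_partial (n : nat) (A : CMat) (N : nat) : CMat :=
  match N with
  | O => czero
  | S M => cadd (cexp_partial n A M) (cscal (/ INR (fact M)) 0 (cpow n A M))
  end.

Definition is_cexp (n : nat) (A E : CMat) : Prop :=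
  forall i j, (i < n)%nat -> (j < n)%nat ->
    Un_cv (fun N => ReM (cexp_partial n A N) i j) (ReM E i j) /\
    Un_cv (fun N => ImM (cexp_partial n A N) i j) (ImM E i j).

Definition cexp (n : nat) (A : CMat) : CMat :=
  epsilon (inhabits czero) (fun E => is_cexp n A E).

(* matrix exponential of a real matrix (real part of the complex one,
   whose imaginary part vanishes) *)
Definition rexp (n : nat) (A : Mat) : Mat := ReM (cexp n (cofReal A)).

(* the symplectic matrix J = [[0, I_d], [-I_d, 0]] of size 2d *)
Definition Jmat (d : nat) : Mat := fun i j =>
  if Nat.ltb i d then (if Nat.eqb j (i + d) then 1 else 0)
  else if Nat.ltb i (2 * d) then (if Nat.eqb (j + d) i then -1 else 0)
  else 0.

Definition csym (n : nat) (Q : CMat) : Prop :=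
  forall i j, (i < n)%nat -> (j < n)%nat ->
    ReM Q i j = ReM Q j i /\ ImM Q i j = ImM Q j i.

Definition Fmat (d : nat) (Q : CMat) : CMat := cmul (2 * d) (cofReal (Jmat d)) Q.

(* singular space S = (cap_{j=0}^{2d-1} Ker[Re F (Im F)^j]) cap R^{2d} *)
Definition singS (d : nat) (Q : CMat) (x : Vec) : Prop :=
  forall j, (j < 2 * d)%nat ->
    rker (2 * d) (mmul (2 * d) (ReM (Fmat d Q)) (mpow (2 * d) (ImM (Fmat d Q)) j)) x.

(* Write F = A + iB with A, B real.  If A B^j x = 0 for every j, then iF = -B + iA acts on
   the vectors B^j x as -B does, so (iF)^k x = (-B)^k x is real and e^{isF} x = e^{-sB} x.
   Conversely, as long as A B^j x = 0 for j < k one has Im (iF)^(k+1) x = (-1)^k A B^k x,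
   which characterises S by the kernels of Im (iF)^k; Cayley-Hamilton reduces the conditions
   A B^j x = 0 to j < 2d.  If Im e^{isF} x = 0 for s in (0, t], then the power series
   sum_k s^k Im((iF)^k x) / k! vanishes on (0, t]; its coefficients are of exponential type,
   so all of them vanish.  Finally e^{cB} commutes with B and has inverse e^{-cB}, hence
   maps S onto itself. *)

From Stdlib Require Import Arith Reals ClassicalEpsilon Lra Lia FunctionalExtensionality.
From Coquelicot Require Import Coquelicot.
From mathcomp Require all_boot all_algebra Rstruct.
Open Scope R_scope.

(** * Finite sums and series *)

Lemma rsum_ext n f g : (forall k, (k < n)%nat -> f k = g k) -> rsum n f = rsum n g.
Proof.
  induction n as [|n IH]; intros H; simpl; [reflexivity|].
  rewrite IH, H; [reflexivity|lia|intros; apply H; lia].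
Qed.

Lemma rsum_0 n : rsum n (fun _ => 0) = 0.
Proof. induction n; simpl; [|rewrite IHn]; ring. Qed.

Lemma rsum_eq_0 n f : (forall k, (k < n)%nat -> f k = 0) -> rsum n f = 0.
Proof. intros H. rewrite (rsum_ext n f (fun _ => 0)) by exact H. apply rsum_0. Qed.

Lemma rsum_plus n f g : rsum n (fun k => f k + g k) = rsum n f + rsum n g.
Proof. induction n; simpl; [|rewrite IHn]; ring. Qed.

Lemma rsum_minus n f g : rsum n (fun k => f k - g k) = rsum n f - rsum n g.
Proof. induction n; simpl; [|rewrite IHn]; ring. Qed.

Lemma rsum_mult_l n c f : rsum n (fun k => c * f k) = c * rsum n f.
Proof. induction n; simpl; [|rewrite IHn]; ring. Qed.

Lemma rsum_swap n m (f : nat -> nat -> R) :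
  rsum n (fun i => rsum m (f i)) = rsum m (fun j => rsum n (fun i => f i j)).
Proof.
  induction n; simpl; [now rewrite rsum_0|].
  now rewrite IHn, <- rsum_plus.
Qed.

Lemma rsum_le n f g : (forall k, (k < n)%nat -> f k <= g k) -> rsum n f <= rsum n g.
Proof.
  induction n; intros H; simpl; [lra|].
  apply Rplus_le_compat; [apply IHn; intros|]; apply H; lia.
Qed.

Lemma rsum_nonneg n f : (forall k, (k < n)%nat -> 0 <= f k) -> 0 <= rsum n f.
Proof. intros H. rewrite <- (rsum_0 n). now apply rsum_le. Qed.

Lemma Rabs_rsum_le n f : Rabs (rsum n f) <= rsum n (fun k => Rabs (f k)).
Proof.
  induction n; simpl; [rewrite Rabs_R0; lra|].
  eapply Rle_trans; [apply Rabs_triang|lra].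
Qed.

Lemma rsum_ge_term n f i :
  (i < n)%nat -> (forall k, (k < n)%nat -> 0 <= f k) -> f i <= rsum n f.
Proof.
  induction n; intros Hi Hf; simpl; [lia|].
  assert (Hs : 0 <= rsum n f).
  { apply rsum_nonneg. intros; apply Hf; lia. }
  destruct (Nat.eq_dec i n) as [->|Hne]; [lra|].
  assert (0 <= f n) by (apply Hf; lia).
  assert (f i <= rsum n f) by (apply IHn; [lia|intros; apply Hf; lia]).
  lra.
Qed.

Lemma rsum_single n f i :
  (i < n)%nat -> (forall k, (k < n)%nat -> k <> i -> f k = 0) -> rsum n f = f i.
Proof.
  induction n; intros Hi Hf; simpl; [lia|].
  destruct (Nat.eq_dec i n) as [->|Hne].
  - rewrite rsum_eq_0; [ring|]. intros; apply Hf; lia.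
  - rewrite IHn, (Hf n) by (lia || (intros; apply Hf; lia)). ring.
Qed.

Lemma sum_f_R0_rsum f N : sum_f_R0 f N = rsum (S N) f.
Proof. induction N; simpl; [ring|now rewrite IHN]. Qed.

Lemma is_series_rsum_lim f l : is_series f l <-> Un_cv (fun N => rsum N f) l.
Proof.
  rewrite is_series_Reals. split; intros H eps Heps; destruct (H eps Heps) as [N HN].
  - exists (S N). intros [|m] Hm; [lia|]. rewrite <- sum_f_R0_rsum. apply HN. lia.
  - exists N. intros m Hm. rewrite sum_f_R0_rsum. apply HN. lia.
Qed.

(* [is_series_ext] states its equation in the carrier of a normed module, where
   [ring] does not recognise [R]. *)
Lemma is_series_ext_R (a b : nat -> R) l :
  (forall k, a k = b k) -> is_series a l -> is_series b l.
Proof. apply is_series_ext. Qed.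

Lemma is_series_unique_lim (u : nat -> R) l1 l2 : is_series u l1 -> is_series u l2 -> l1 = l2.
Proof. intros H1 H2. now rewrite <- (is_series_unique u l1 H1), (is_series_unique u l2 H2). Qed.

Lemma is_series_head u : (forall k, u (S k) = 0) -> is_series u (u O).
Proof.
  intros H. apply is_series_rsum_lim. intros eps Heps. exists 1%nat. intros [|N] HN; [lia|].
  replace (rsum (S N) u) with (u O).
  - unfold Rdist. rewrite Rminus_diag, Rabs_R0. exact Heps.
  - clear HN. induction N; simpl in *; [ring|]. rewrite <- IHN, H. ring.
Qed.

Lemma is_series_0 : is_series (fun _ => 0) 0.
Proof. now apply is_series_head. Qed.

Lemma is_series_rsum m (f : nat -> nat -> R) (l : nat -> R) :
  (forall j, (j < m)%nat -> is_series (fun k => f k j) (l j)) ->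
  is_series (fun k => rsum m (f k)) (rsum m l).
Proof.
  induction m; intros H; simpl; [apply is_series_0|].
  apply (is_series_plus (V := R_NormedModule)); [apply IHm; intros|]; apply H; lia.
Qed.

(** * Matrices acting on vectors *)

Definition vzero : Vec := fun _ => 0.

Section MatrixAction.
Variable n : nat.

Lemma mapply_veq A x y : veq n x y -> mapply n A x = mapply n A y.
Proof.
  intros H. apply functional_extensionality; intro i.
  apply rsum_ext. intros k Hk. now rewrite H.
Qed.

Lemma mapply_mmul A B x : mapply n (mmul n A B) x = mapply n A (mapply n B x).
Proof.
  apply functional_extensionality; intro i. unfold mapply, mmul.
  rewrite (rsum_ext n _ (fun k => rsum n (fun l => A i l * B l k * x k))).
  2:{ intros k _. rewrite Rmult_comm, <- rsum_mult_l. apply rsum_ext. intros; ring. }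
  rewrite rsum_swap. apply rsum_ext. intros l _.
  rewrite <- rsum_mult_l. apply rsum_ext. intros; ring.
Qed.

Lemma mapply_mid x : veq n (mapply n mid x) x.
Proof.
  intros i Hi. unfold mapply, mid.
  rewrite (rsum_single n _ i Hi), Nat.eqb_refl; [ring|].
  intros k _ Hk. destruct (Nat.eqb_spec i k); [lia|ring].
Qed.

Lemma mapply_madd A B x i : mapply n (madd A B) x i = mapply n A x i + mapply n B x i.
Proof. unfold mapply, madd. rewrite <- rsum_plus. apply rsum_ext; intros; cbv beta; ring. Qed.

Lemma mapply_msub A B x i : mapply n (msub A B) x i = mapply n A x i - mapply n B x i.
Proof. unfold mapply, msub. rewrite <- rsum_minus. apply rsum_ext; intros; cbv beta; ring. Qed.

Lemma mapply_mscal c A x i : mapply n (mscal c A) x i = c * mapply n A x i.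
Proof. unfold mapply, mscal. rewrite <- rsum_mult_l. apply rsum_ext; intros; cbv beta; ring. Qed.

Lemma mapply_mzero x i : mapply n mzero x i = 0.
Proof.
  unfold mapply, mzero. apply rsum_eq_0; intros; ring.
Qed.

Lemma mapply_vscal A c x i : mapply n A (fun j => c * x j) i = c * mapply n A x i.
Proof. unfold mapply. rewrite <- rsum_mult_l. apply rsum_ext; intros; cbv beta; ring. Qed.

Lemma mapply_vzero A i : mapply n A vzero i = 0.
Proof.
  unfold mapply, vzero. apply rsum_eq_0; intros; ring.
Qed.

Lemma mapply_lincomb A m (c : nat -> R) (v : nat -> Vec) i :
  mapply n A (fun j => rsum m (fun k => c k * v k j)) i =
  rsum m (fun k => c k * mapply n A (v k) i).
Proof.
  unfold mapply.
  rewrite (rsum_ext n _ (fun j => rsum m (fun k => A i j * (c k * v k j))))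
    by (intros; now rewrite <- rsum_mult_l).
  rewrite rsum_swap. apply rsum_ext. intros k _.
  rewrite <- rsum_mult_l. apply rsum_ext. intros; ring.
Qed.

Lemma Rabs_mapply_le A x i c :
  (forall j, (j < n)%nat -> Rabs (A i j) <= c) ->
  Rabs (mapply n A x i) <= c * rsum n (fun j => Rabs (x j)).
Proof.
  intros HA. eapply Rle_trans; [apply Rabs_rsum_le|].
  rewrite <- rsum_mult_l. apply rsum_le. intros j Hj.
  rewrite Rabs_mult. apply Rmult_le_compat_r; [apply Rabs_pos|auto].
Qed.

Lemma is_series_mapply A (u : nat -> Vec) (z : Vec) i :
  (forall j, (j < n)%nat -> is_series (fun k => u k j) (z j)) ->
  is_series (fun k => mapply n A (u k) i) (mapply n A z i).
Proof.
  intros H. apply is_series_rsum. intros j Hj. exact (is_series_scal (A i j) _ _ (H j Hj)).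
Qed.

End MatrixAction.

Definition krylov n (B : Mat) (x : Vec) k : Vec := mapply n (mpow n B k) x.

Lemma krylov_S n B x k : krylov n B x (S k) = mapply n B (krylov n B x k).
Proof. apply mapply_mmul. Qed.

Lemma mapply_mpow_krylov n B x j k :
  veq n (mapply n (mpow n B j) (krylov n B x k)) (krylov n B x (j + k)).
Proof.
  induction j; intros i Hi; simpl; [now apply mapply_mid|].
  now rewrite mapply_mmul, (mapply_veq n B _ _ IHj), <- krylov_S.
Qed.

Lemma mpow_mscal n c B k i j : mpow n (mscal c B) k i j = c ^ k * mpow n B k i j.
Proof.
  revert i j. induction k; intros i j; simpl; [ring|].
  unfold mmul. rewrite <- rsum_mult_l. apply rsum_ext. intros l _.
  rewrite IHk. unfold mscal. ring.
Qed.

Lemma cpow_cofReal n M k i j :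
  ReM (cpow n (cofReal M) k) i j = mpow n M k i j /\
  ImM (cpow n (cofReal M) k) i j = 0.
Proof.
  assert (Z : forall f : nat -> R, rsum n (fun l => 0 * f l) = 0).
  { intros f. apply rsum_eq_0. intros; ring. }
  revert i j. induction k; intros i j; [split; reflexivity|].
  simpl. unfold msub, madd, mmul, mzero; simpl. rewrite !Z, Rminus_0_r, Rplus_0_r.
  split.
  - apply rsum_ext. intros l _. now rewrite (proj1 (IHk l j)).
  - apply rsum_eq_0. intros l _. rewrite (proj2 (IHk l j)). ring.
Qed.

Lemma cpow_imul_scal n F c k i j :
  ReM (cpow n (cscal 0 c F) k) i j = c ^ k * ReM (cpow n (cscal 0 1 F) k) i j /\
  ImM (cpow n (cscal 0 c F) k) i j = c ^ k * ImM (cpow n (cscal 0 1 F) k) i j.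
Proof.
  revert i j. induction k; intros i j; simpl; unfold msub, madd, mmul, mscal; simpl.
  - unfold mid, mzero. split; ring.
  - rewrite Rmult_minus_distr_l, Rmult_plus_distr_l, <- !rsum_mult_l.
    split; f_equal; apply rsum_ext; intros l _;
      rewrite ?(proj1 (IHk l j)), ?(proj2 (IHk l j)); ring.
Qed.

Lemma Rabs_rsum_mul2_le n (a b u v : nat -> R) c :
  (forall l, (l < n)%nat -> Rabs (u l) <= c /\ Rabs (v l) <= c) ->
  Rabs (rsum n (fun l => a l * u l)) + Rabs (rsum n (fun l => b l * v l)) <=
  rsum n (fun l => Rabs (a l) + Rabs (b l)) * c.
Proof.
  intros H. rewrite Rmult_comm, <- rsum_mult_l.
  eapply Rle_trans; [apply Rplus_le_compat; apply Rabs_rsum_le|].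
  rewrite <- rsum_plus. apply rsum_le. intros l Hl. rewrite !Rabs_mult.
  destruct (H l Hl). pose proof (Rabs_pos (a l)). pose proof (Rabs_pos (b l)).
  nra.
Qed.

Lemma cpow_entry_bound n (G : CMat) : exists K, 0 <= K /\
  forall k i j, (i < n)%nat -> (j < n)%nat ->
    Rabs (ReM (cpow n G k) i j) <= K ^ k /\ Rabs (ImM (cpow n G k) i j) <= K ^ k.
Proof.
  (* The sum K of the row sums of |Re G| + |Im G| gives |(G^(k+1))_ij| <= row_i * K^k <= K^(k+1). *)
  set (row i := rsum n (fun l => Rabs (ReM G i l) + Rabs (ImM G i l))).
  assert (Hrow : forall i, 0 <= row i).
  { intros i. apply rsum_nonneg. intros l _.
    pose proof (Rabs_pos (ReM G i l)). pose proof (Rabs_pos (ImM G i l)). lra. }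
  assert (HK : 0 <= rsum n row) by (apply rsum_nonneg; auto).
  exists (rsum n row). split; [exact HK|].
  induction k; intros i j Hi Hj; simpl.
  - unfold mid, mzero. rewrite Rabs_R0.
    destruct (Nat.eqb i j); rewrite ?Rabs_R1, ?Rabs_R0; lra.
  - assert (Hi_row : row i * rsum n row ^ k <= rsum n row * rsum n row ^ k).
    { apply Rmult_le_compat_r; [apply pow_le, HK|].
      apply rsum_ge_term; auto. }
    unfold msub, madd, mmul, row in *. split.
    + pose proof (Rabs_rsum_mul2_le n (ReM G i) (ImM G i)
        (fun l => ReM (cpow n G k) l j) (fun l => ImM (cpow n G k) l j) _
        (fun l Hl => IHk l j Hl Hj)).
      unfold Rminus. eapply Rle_trans; [apply Rabs_triang|]. rewrite Rabs_Ropp. lra.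
    + pose proof (Rabs_rsum_mul2_le n (ReM G i) (ImM G i)
        (fun l => ImM (cpow n G k) l j) (fun l => ReM (cpow n G k) l j) _
        (fun l Hl => let (h1, h2) := IHk l j Hl Hj in conj h2 h1)).
      eapply Rle_trans; [apply Rabs_triang|]. lra.
Qed.

Lemma mpow_entry_bound n B : exists K, 0 <= K /\
  forall k i j, (i < n)%nat -> (j < n)%nat -> Rabs (mpow n B k i j) <= K ^ k.
Proof.
  destruct (cpow_entry_bound n (cofReal B)) as [K [HK0 HK]]. exists K. split; [exact HK0|].
  intros k i j Hi Hj. rewrite <- (proj1 (cpow_cofReal n B k i j)). apply HK; auto.
Qed.

(** * Power series with coefficients of exponential type *)

Definition exp_type (u : nat -> R) : Prop :=
  exists C L, 0 <= C /\ 0 <= L /\ forall k, Rabs (u k) <= C * (/ INR (fact k) * L ^ k).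

Lemma inv_fact_pos k : 0 < / INR (fact k).
Proof. apply Rinv_0_lt_compat, INR_fact_lt_0. Qed.

Lemma exp_type_intro (v : nat -> R) C L :
  0 <= L -> (forall k, Rabs (v k) <= C * L ^ k) -> exp_type (fun k => / INR (fact k) * v k).
Proof.
  intros HL Hv. exists C, L. split; [|split; [exact HL|]].
  - pose proof (Hv O). pose proof (Rabs_pos (v O)). simpl in *. lra.
  - intros k. pose proof (inv_fact_pos k). pose proof (Hv k).
    rewrite Rabs_mult, Rabs_right by lra. nra.
Qed.

Lemma exp_type_pow_mul (v : nat -> R) c C K :
  0 <= K -> (forall k, Rabs (v k) <= C * K ^ k) ->
  exp_type (fun k => / INR (fact k) * (c ^ k * v k)).
Proof.
  intros HK Hv. apply (exp_type_intro _ C (Rabs c * K)); [pose proof (Rabs_pos c); nra|].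
  intros k. rewrite Rabs_mult, <- RPow_abs, Rpow_mult_distr.
  pose proof (pow_le (Rabs c) k (Rabs_pos c)). pose proof (Hv k). nra.
Qed.

Lemma ex_series_Rabs_exp_type u : exp_type u -> ex_series (fun k => Rabs (u k)).
Proof.
  intros (C & L & HC & HL & Hu).
  apply (ex_series_le (V := R_CompleteNormedModule) _ (fun k => C * (/ INR (fact k) * L ^ k))).
  - intros k. change (Rabs (Rabs (u k)) <= C * (/ INR (fact k) * L ^ k)).
    rewrite Rabs_Rabsolu. apply Hu.
  - destruct (exist_exp L) as [l Hl]. exists (C * l).
    apply (is_series_scal (V := R_NormedModule) C), is_series_Reals, Hl.
Qed.

Lemma ex_series_exp_type u : exp_type u -> ex_series u.
Proof. intros Hu. apply ex_series_Rabs, ex_series_Rabs_exp_type, Hu. Qed.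

Lemma exp_type_mul_pow u s : exp_type u -> exp_type (fun k => u k * s ^ k).
Proof.
  intros (C & L & HC & HL & Hu). exists C, (L * Rabs s).
  split; [exact HC|split; [pose proof (Rabs_pos s); nra|]].
  intros k. rewrite Rabs_mult, <- RPow_abs, Rpow_mult_distr.
  pose proof (pow_le (Rabs s) k (Rabs_pos s)). pose proof (Hu k).
  pose proof (Rabs_pos (u k)). nra.
Qed.

Lemma exp_type_shift u : exp_type u -> exp_type (fun k => u (S k)).
Proof.
  intros (C & L & HC & HL & Hu). exists (C * L), L.
  split; [nra|split; [exact HL|]].
  intros k. eapply Rle_trans; [apply Hu|].
  assert (Hfact : / INR (fact (S k)) <= / INR (fact k)).
  { apply Rinv_le_contravar; [apply INR_fact_lt_0|]. apply le_INR.
    simpl. lia. }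
  pose proof (pow_le L k HL). simpl (L ^ S k).
  assert (0 <= C * L * L ^ k) by (apply Rmult_le_pos; nra).
  nra.
Qed.

Lemma Series_pow_S u s : exp_type u ->
  Series (fun k => u k * s ^ k) = u O + s * Series (fun k => u (S k) * s ^ k).
Proof.
  intros Hu. rewrite Series_incr_1 by apply ex_series_exp_type, exp_type_mul_pow, Hu.
  rewrite Rmult_1_r, <- Series_scal_l. f_equal.
  apply Series_ext. intros k. simpl. ring.
Qed.

Lemma Rabs_Series_pow_le u s : exp_type u -> 0 <= s <= 1 ->
  Rabs (Series (fun k => u k * s ^ k)) <= Series (fun k => Rabs (u k)).
Proof.
  intros Hu Hs. eapply Rle_trans.
  { apply Series_Rabs, ex_series_Rabs_exp_type, exp_type_mul_pow, Hu. }
  apply Series_le; [|apply ex_series_Rabs_exp_type, Hu].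
  intros k. split; [apply Rabs_pos|].
  rewrite Rabs_mult, <- RPow_abs, (Rabs_right s) by lra.
  pose proof (pow_le s k ltac:(lra)). pose proof (pow_incr s 1 k Hs).
  rewrite pow1 in *. pose proof (Rabs_pos (u k)). nra.
Qed.

Lemma Rle_0_of_le_mul_small a D t :
  0 < t -> (forall s, 0 < s <= t -> a <= s * D) -> a <= 0.
Proof.
  intros Ht H. apply Rle_plus_epsilon. intros eps Heps. rewrite Rplus_0_l.
  pose proof (Rabs_pos D). pose proof (Rle_abs D).
  set (s := Rmin t (eps / (Rabs D + 1))).
  assert (Hs0 : 0 < s) by (apply Rmin_pos; [|apply Rdiv_lt_0_compat]; lra).
  assert (Hse : s * (Rabs D + 1) <= eps).
  { replace eps with (eps / (Rabs D + 1) * (Rabs D + 1)) by (field; lra).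
    apply Rmult_le_compat_r; [lra|apply Rmin_r]. }
  pose proof (H s (conj Hs0 (Rmin_l _ _))). nra.
Qed.

Section VanishingPowerSeries.
Variables (t : R) (Ht : 0 < t).

Lemma power_series_vanish_head u : exp_type u ->
  (forall s, 0 < s <= t -> Series (fun k => u k * s ^ k) = 0) -> u O = 0.
Proof.
  intros Hu H0.
  assert (Hsmall : forall s, 0 < s <= Rmin 1 t ->
            Rabs (u O) <= s * Series (fun k => Rabs (u (S k)))).
  { intros s [Hs0 Hs]. pose proof (Rmin_l 1 t). pose proof (Rmin_r 1 t).
    pose proof (Series_pow_S u s Hu) as E. rewrite H0 in E by lra.
    replace (u O) with (- (s * Series (fun k => u (S k) * s ^ k))) by lra.
    rewrite Rabs_Ropp, Rabs_mult, (Rabs_right s) by lra.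
    apply Rmult_le_compat_l; [lra|]. apply Rabs_Series_pow_le; [apply exp_type_shift, Hu|lra]. }
  assert (Hm : 0 < Rmin 1 t) by (apply Rmin_pos; lra).
  pose proof (Rle_0_of_le_mul_small _ _ _ Hm Hsmall).
  destruct (Req_dec (u O) 0) as [|Hne]; [assumption|].
  pose proof (Rabs_pos (u O)). pose proof (Rabs_no_R0 _ Hne). lra.
Qed.

Lemma power_series_vanish_tail u : exp_type u ->
  (forall s, 0 < s <= t -> Series (fun k => u k * s ^ k) = 0) ->
  forall s, 0 < s <= t -> Series (fun k => u (S k) * s ^ k) = 0.
Proof.
  intros Hu H0 s Hs. pose proof (Series_pow_S u s Hu) as E.
  rewrite H0, (power_series_vanish_head u Hu H0), Rplus_0_l in E by exact Hs.
  symmetry in E. apply Rmult_integral in E. destruct E; [lra|assumption].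
Qed.

Lemma power_series_vanish u : exp_type u ->
  (forall s, 0 < s <= t -> Series (fun k => u k * s ^ k) = 0) -> forall m, u m = 0.
Proof.
  intros Hu H0 m. revert u Hu H0. induction m as [|m IH]; intros u Hu H0.
  - exact (power_series_vanish_head u Hu H0).
  - apply (IH (fun k => u (S k))); [apply exp_type_shift, Hu|].
    apply power_series_vanish_tail; assumption.
Qed.
End VanishingPowerSeries.

(** * The matrix exponential *)

Lemma cexp_partial_entries n G N i j :
  ReM (cexp_partial n G N) i j = rsum N (fun k => / INR (fact k) * ReM (cpow n G k) i j) /\
  ImM (cexp_partial n G N) i j = rsum N (fun k => / INR (fact k) * ImM (cpow n G k) i j).
Proof.
  induction N as [|N [HRe HIm]]; simpl; [split; reflexivity|].
  unfold madd, msub, mscal; simpl. rewrite HRe, HIm. split; ring.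
Qed.

Lemma exp_type_cpow_entries n G i j : (i < n)%nat -> (j < n)%nat ->
  exp_type (fun k => / INR (fact k) * ReM (cpow n G k) i j) /\
  exp_type (fun k => / INR (fact k) * ImM (cpow n G k) i j).
Proof.
  intros Hi Hj. destruct (cpow_entry_bound n G) as [K [HK0 HK]].
  split; apply (exp_type_intro _ 1 K HK0); intros k; rewrite Rmult_1_l; apply HK; auto.
Qed.

Lemma is_series_cexp n G i j : (i < n)%nat -> (j < n)%nat ->
  is_series (fun k => / INR (fact k) * ReM (cpow n G k) i j) (ReM (cexp n G) i j) /\
  is_series (fun k => / INR (fact k) * ImM (cpow n G k) i j) (ImM (cexp n G) i j).
Proof.
  assert (Hc : is_cexp n G (cexp n G)).
  { unfold cexp. apply epsilon_spec.
    exists (mkCMat (fun i j => Series (fun k => / INR (fact k) * ReM (cpow n G k) i j))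
                   (fun i j => Series (fun k => / INR (fact k) * ImM (cpow n G k) i j))).
    intros i' j' Hi Hj. simpl. destruct (exp_type_cpow_entries n G i' j' Hi Hj) as [HRe HIm].
    split; eapply Un_cv_ext; try (intros N; symmetry; apply (cexp_partial_entries n G N i' j'));
      apply is_series_rsum_lim, Series_correct, ex_series_exp_type; assumption. }
  intros Hi Hj. destruct (Hc i j Hi Hj) as [HRe HIm].
  split; apply is_series_rsum_lim; eapply Un_cv_ext; try eassumption;
    intros N; apply (cexp_partial_entries n G N i j).
Qed.

Lemma is_series_cexp_apply n G x i : (i < n)%nat ->
  is_series (fun k => / INR (fact k) * mapply n (ReM (cpow n G k)) x i)
            (mapply n (ReM (cexp n G)) x i) /\
  is_series (fun k => / INR (fact k) * mapply n (ImM (cpow n G k)) x i)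
            (mapply n (ImM (cexp n G)) x i).
Proof.
  intros Hi. unfold mapply. split.
  - apply (is_series_ext_R (fun k => rsum n (fun j => / INR (fact k) * ReM (cpow n G k) i j * x j))).
    + intros k. rewrite <- rsum_mult_l. apply rsum_ext. intros; ring.
    + apply is_series_rsum. intros j Hj. apply is_series_scal_r, (is_series_cexp n G i j Hi Hj).
  - apply (is_series_ext_R (fun k => rsum n (fun j => / INR (fact k) * ImM (cpow n G k) i j * x j))).
    + intros k. rewrite <- rsum_mult_l. apply rsum_ext. intros; ring.
    + apply is_series_rsum. intros j Hj. apply is_series_scal_r, (is_series_cexp n G i j Hi Hj).
Qed.

Lemma is_series_rexp_apply n B c x i : (i < n)%nat ->
  is_series (fun k => / INR (fact k) * (c ^ k * krylov n B x k i))
            (mapply n (rexp n (mscal c B)) x i).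
Proof.
  intros Hi. eapply is_series_ext_R; [|apply (proj1 (is_series_cexp_apply n _ x i Hi))].
  intros k. unfold krylov, mapply. rewrite <- !rsum_mult_l. apply rsum_ext. intros j _.
  rewrite (proj1 (cpow_cofReal n (mscal c B) k i j)), mpow_mscal. ring.
Qed.

Lemma binomial_fact a b m :
  sum_f_R0 (fun k => / INR (fact k) * a ^ k * (/ INR (fact (m - k)) * b ^ (m - k))) m =
  / INR (fact m) * (a + b) ^ m.
Proof.
  rewrite binomial, scal_sum. apply sum_eq. intros k Hk. unfold Binomial.C.
  pose proof (INR_fact_neq_0 k). pose proof (INR_fact_neq_0 (m - k)).
  pose proof (INR_fact_neq_0 m). field. auto.
Qed.

Section RealExponential.
Variables (n : nat) (B : Mat).

Lemma exp_type_rexp_terms c x i : (i < n)%nat ->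
  exp_type (fun k => / INR (fact k) * (c ^ k * krylov n B x k i)).
Proof.
  intros Hi. destruct (mpow_entry_bound n B) as [K [HK0 HK]].
  apply (exp_type_pow_mul _ c (rsum n (fun j => Rabs (x j))) K HK0). intros k.
  rewrite Rmult_comm. apply Rabs_mapply_le. intros j Hj. apply HK; assumption.
Qed.

Lemma is_series_rexp_entry c i j : (i < n)%nat -> (j < n)%nat ->
  is_series (fun k => / INR (fact k) * (c ^ k * mpow n B k i j)) (rexp n (mscal c B) i j).
Proof.
  intros Hi Hj. eapply is_series_ext_R; [|apply (proj1 (is_series_cexp n (cofReal (mscal c B)) i j Hi Hj))].
  intros k. cbv beta. now rewrite (proj1 (cpow_cofReal n (mscal c B) k i j)), mpow_mscal.
Qed.

Lemma rsum_cauchy_krylov a b y m i : (i < n)%nat ->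
  rsum n (fun j => sum_f_R0 (fun k => / INR (fact k) * (a ^ k * mpow n B k i j) *
           (/ INR (fact (m - k)) * (b ^ (m - k) * krylov n B y (m - k) j))) m) =
  / INR (fact m) * ((a + b) ^ m * krylov n B y m i).
Proof.
  intros Hi.
  rewrite (rsum_ext n _ (fun j => rsum (S m) (fun k => / INR (fact k) * (a ^ k * mpow n B k i j) *
           (/ INR (fact (m - k)) * (b ^ (m - k) * krylov n B y (m - k) j)))))
    by (intros; apply sum_f_R0_rsum).
  rewrite rsum_swap.
  rewrite (rsum_ext (S m) _ (fun k => krylov n B y m i *
     (/ INR (fact k) * a ^ k * (/ INR (fact (m - k)) * b ^ (m - k))))).
  2:{ intros k Hk. replace m with (k + (m - k))%nat at 1 by lia.
      rewrite <- (mapply_mpow_krylov n B y k (m - k) i Hi). unfold mapply.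
      rewrite Rmult_comm, <- rsum_mult_l. apply rsum_ext. intros; ring. }
  rewrite rsum_mult_l, <- sum_f_R0_rsum, binomial_fact. ring.
Qed.

Lemma rexp_add_apply a b y :
  veq n (mapply n (rexp n (mscal a B)) (mapply n (rexp n (mscal b B)) y))
        (mapply n (rexp n (mscal (a + b) B)) y).
Proof.
  intros i Hi. destruct (mpow_entry_bound n B) as [K [HK0 HK]].
  apply (is_series_unique_lim (fun m => rsum n (fun j =>
     sum_f_R0 (fun k => / INR (fact k) * (a ^ k * mpow n B k i j) *
       (/ INR (fact (m - k)) * (b ^ (m - k) * krylov n B y (m - k) j))) m))).
  - apply is_series_rsum. intros j Hj.
    apply (is_series_mult (fun k => / INR (fact k) * (a ^ k * mpow n B k i j))
                          (fun k => / INR (fact k) * (b ^ k * krylov n B y k j))).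
    + apply is_series_rexp_entry; assumption.
    + apply is_series_rexp_apply, Hj.
    + apply ex_series_Rabs_exp_type, (exp_type_pow_mul _ a 1 K HK0).
      intros k. rewrite Rmult_1_l. apply HK; assumption.
    + apply ex_series_Rabs_exp_type, exp_type_rexp_terms, Hj.
  - eapply is_series_ext_R; [intros m; symmetry; apply rsum_cauchy_krylov, Hi|].
    apply is_series_rexp_apply, Hi.
Qed.

Lemma rexp_0_apply y : veq n (mapply n (rexp n (mscal 0 B)) y) y.
Proof.
  intros i Hi. rewrite <- (mapply_mid n y i Hi).
  apply (is_series_unique_lim _ _ _ (is_series_rexp_apply n B 0 y i Hi)).
  replace (mapply n mid y i) with (/ INR (fact 0) * (0 ^ 0 * krylov n B y 0 i))
    by (unfold krylov; simpl; field).
  apply is_series_head. intros k. simpl. ring.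
Qed.

Lemma rexp_opp_apply a y :
  veq n (mapply n (rexp n (mscal a B)) (mapply n (rexp n (mscal (- a) B)) y)) y.
Proof.
  intros i Hi. rewrite (rexp_add_apply a (- a) y i Hi), Rplus_opp_r.
  exact (rexp_0_apply y i Hi).
Qed.
End RealExponential.

(** * The singular space *)

Section SingularSpace.
Variables (n : nat) (F : CMat).

Definition sing (x : Vec) : Prop :=
  forall j, veq n (mapply n (ReM F) (krylov n (ImM F) x j)) vzero.

Lemma sing_veq x y : veq n x y -> sing x -> sing y.
Proof. intros Hxy Hx j. unfold krylov. rewrite <- (mapply_veq n _ _ _ Hxy). apply Hx. Qed.

Lemma sing_rexp_apply c x : sing x -> sing (mapply n (rexp n (mscal c (ImM F))) x).
Proof.
  intros Hx j i Hi. unfold krylov. rewrite <- mapply_mmul.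
  apply (is_series_unique_lim
           (fun k => mapply n (mmul n (ReM F) (mpow n (ImM F) j))
                       (fun l => / INR (fact k) * (c ^ k * krylov n (ImM F) x k l)) i)).
  - apply is_series_mapply. intros l Hl. apply is_series_rexp_apply, Hl.
  - apply (is_series_ext_R (fun _ => 0)); [|apply is_series_0].
    intros k. rewrite !mapply_vscal, mapply_mmul, (mapply_veq n _ _ _ (mapply_mpow_krylov n _ x j k)).
    rewrite (Hx (j + k)%nat i Hi). unfold vzero; cbv beta; ring.
Qed.

Lemma cpow_imul_apply k x :
  (forall j, (j < k)%nat -> veq n (mapply n (ReM F) (krylov n (ImM F) x j)) vzero) ->
  veq n (mapply n (ReM (cpow n (cscal 0 1 F) k)) x) (fun i => (-1) ^ k * krylov n (ImM F) x k i) /\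
  veq n (mapply n (ImM (cpow n (cscal 0 1 F) k)) x) vzero.
Proof.
  induction k as [|k IH]; intros Hx.
  - split; intros i Hi; simpl; [unfold krylov; simpl; ring|apply mapply_mzero].
  - destruct IH as [HRe HIm]; [intros; apply Hx; lia|].
    split; intros i Hi; simpl;
      rewrite ?mapply_msub, ?mapply_madd, !mapply_mmul, (mapply_veq n _ _ _ HRe),
        (mapply_veq n _ _ _ HIm), mapply_vzero, mapply_vscal, ?mapply_msub, ?mapply_madd,
        !mapply_mscal.
    + rewrite krylov_S. ring.
    + rewrite (Hx k (Nat.lt_succ_diag_r k) i Hi). unfold vzero; cbv beta; ring.
Qed.

Lemma Im_cpow_imul_S_apply k x :
  (forall j, (j < k)%nat -> veq n (mapply n (ReM F) (krylov n (ImM F) x j)) vzero) ->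
  veq n (mapply n (ImM (cpow n (cscal 0 1 F) (S k))) x)
        (fun i => (-1) ^ k * mapply n (ReM F) (krylov n (ImM F) x k) i).
Proof.
  intros Hx. destruct (cpow_imul_apply k x Hx) as [HRe HIm]. intros i Hi. simpl.
  rewrite mapply_madd, !mapply_mmul, (mapply_veq n _ _ _ HRe), (mapply_veq n _ _ _ HIm).
  rewrite mapply_vzero, mapply_vscal, mapply_madd, !mapply_mscal. ring.
Qed.

Lemma sing_iff_Im_cpow_imul x :
  sing x <->
  forall k, (1 <= k)%nat -> veq n (mapply n (ImM (cpow n (cscal 0 1 F) k)) x) vzero.
Proof.
  split.
  - intros Hx [|k] Hk; [lia|]. apply (cpow_imul_apply (S k)). intros; apply Hx.
  - intros HIm.
    assert (Hlt : forall m j, (j < m)%nat ->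
              veq n (mapply n (ReM F) (krylov n (ImM F) x j)) vzero).
    { induction m as [|m IH]; intros j Hj; [lia|].
      destruct (Nat.eq_dec j m) as [->|]; [|apply IH; lia].
      intros i Hi. pose proof (Im_cpow_imul_S_apply m x IH i Hi) as E.
      rewrite (HIm (S m) ltac:(lia) i Hi) in E. unfold vzero in *.
      apply (Rmult_eq_reg_l ((-1) ^ m)); [|apply pow_nonzero; lra].
      rewrite <- E. ring. }
    intros j. apply (Hlt (S j)). lia.
Qed.

Lemma mapply_cpow_imul_scal c k x i :
  mapply n (ReM (cpow n (cscal 0 c F) k)) x i =
    c ^ k * mapply n (ReM (cpow n (cscal 0 1 F) k)) x i /\
  mapply n (ImM (cpow n (cscal 0 c F) k)) x i =
    c ^ k * mapply n (ImM (cpow n (cscal 0 1 F) k)) x i.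
Proof.
  unfold mapply. split; rewrite <- rsum_mult_l; apply rsum_ext; intros j _.
  - rewrite (proj1 (cpow_imul_scal n F c k i j)). ring.
  - rewrite (proj2 (cpow_imul_scal n F c k i j)). ring.
Qed.

Lemma cexp_imul_apply_sing c x : sing x ->
  veq n (mapply n (ReM (cexp n (cscal 0 c F))) x)
        (mapply n (rexp n (mscal (- c) (ImM F))) x) /\
  veq n (mapply n (ImM (cexp n (cscal 0 c F))) x) vzero.
Proof.
  intros Hx.
  pose proof (fun k => proj1 (cpow_imul_apply k x (fun j _ => Hx j))) as HRe.
  pose proof (fun k => proj2 (cpow_imul_apply k x (fun j _ => Hx j))) as HIm.
  split; intros i Hi; destruct (is_series_cexp_apply n (cscal 0 c F) x i Hi) as [ERe EIm].
  - apply (is_series_unique_lim _ _ _ ERe).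
    eapply is_series_ext_R; [|apply (is_series_rexp_apply n (ImM F) (- c) x i Hi)].
    intros k. cbv beta.
    rewrite (proj1 (mapply_cpow_imul_scal c k x i)), (HRe k i Hi).
    replace (- c) with (c * -1) by ring. rewrite Rpow_mult_distr. ring.
  - apply (is_series_unique_lim _ _ _ EIm).
    eapply is_series_ext_R; [|apply is_series_0].
    intros k. cbv beta. rewrite (proj2 (mapply_cpow_imul_scal c k x i)), (HIm k i Hi).
    unfold vzero; cbv beta; ring.
Qed.

Lemma sing_of_Im_cexp_imul t x : 0 < t ->
  (forall s, 0 < s <= t -> veq n (mapply n (ImM (cexp n (cscal 0 s F))) x) vzero) ->
  sing x.
Proof.
  intros Ht H. apply sing_iff_Im_cpow_imul. intros k _ i Hi.
  set (y m := mapply n (ImM (cpow n (cscal 0 1 F) m)) x i).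
  assert (Hu : exp_type (fun m => / INR (fact m) * y m)).
  { destruct (cpow_entry_bound n (cscal 0 1 F)) as [K [HK0 HK]].
    apply (exp_type_intro _ (rsum n (fun j => Rabs (x j))) K HK0). intros m.
    rewrite Rmult_comm. apply Rabs_mapply_le. intros j Hj. apply HK; assumption. }
  assert (Hk : / INR (fact k) * y k = 0).
  { apply (power_series_vanish t Ht _ Hu). intros s Hs. apply is_series_unique.
    pose proof (proj2 (is_series_cexp_apply n (cscal 0 s F) x i Hi)) as E.
    rewrite (H s Hs i Hi) in E. eapply is_series_ext_R; [|exact E].
    intros m. cbv beta. rewrite (proj2 (mapply_cpow_imul_scal s m x i)). unfold y. ring. }
  apply Rmult_integral in Hk. destruct Hk as [Hk|Hk]; [|exact Hk].
  exfalso. exact (Rinv_neq_0_compat _ (INR_fact_neq_0 k) Hk).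
Qed.
End SingularSpace.

(** * Cayley-Hamilton *)

Module CayleyHamilton.
Import all_boot all_algebra Rstruct GRing.Theory.
Local Open Scope ring_scope.

Lemma rsum_big n (f : nat -> R) : rsum n f = \sum_(l < n) f l.
Proof.
elim: n => [|n IH]; first by rewrite big_ord0.
by rewrite big_ord_recr /= IH.
Qed.

Section Square.
Variables (n' : nat) (B : Mat).
Let A : 'M[R]_(n'.+1) := \matrix_(i, j) B i j.

Lemma mxpow_mpow k (i j : 'I_(n'.+1)) : (A ^+ k) i j = mpow n'.+1 B k i j.
Proof.
elim: k i j => [|k IH] i j.
  rewrite expr0 mxE /= /mid.
  case: (eqVneq i j) => [->|ne]; first by rewrite Nat.eqb_refl.
  suff -> : Nat.eqb i j = false by [].
  by apply/Nat.eqb_neq => h; move/eqP: ne; apply; exact: ord_inj h.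
rewrite exprS mxE /= /mmul rsum_big.
by apply: eq_bigr => l _; rewrite IH mxE.
Qed.

Lemma mpow_succ_order_comb : exists e : nat -> R, forall i j : 'I_(n'.+1),
  mpow n'.+1 B n'.+1 i j = \sum_(k < n'.+1) e k * mpow n'.+1 B k i j.
Proof.
set p := char_poly A.
have size_p : size p = n'.+2 by rewrite size_char_poly.
have lead_p : p`_(n'.+1) = 1.
  by have := char_poly_monic A; rewrite monicE /lead_coef size_p => /eqP.
have horner_p : horner_mx A p = \sum_(i < size p) p`_i *: A ^+ i.
  rewrite -{1}(coefK p) poly_def rmorph_sum /=.
  by apply: eq_bigr => i _; rewrite horner_mxZ rmorphXn /= horner_mx_X.
have E : \sum_(k < n'.+1) p`_k *: A ^+ k = - A ^+ n'.+1.
  have := Cayley_Hamilton A; rewrite horner_p size_p big_ord_recr lead_p scale1r.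
  by move=> /eqP; rewrite addr_eq0 => /eqP.
exists (fun k => - p`_k) => i j.
rewrite -mxpow_mpow -[A ^+ _]opprK -E mxE summxE -sumrN.
by apply: eq_bigr => k _; rewrite mxE mxpow_mpow mulNr.
Qed.
End Square.

Lemma mpow_order_comb n (B : Mat) : exists e : nat -> R,
  forall i j, Peano.lt i n -> Peano.lt j n ->
  mpow n B n i j = rsum n (fun k => Rmult (e k) (mpow n B k i j)).
Proof.
case: n => [|n']; first by exists (fun _ => 0) => i j /ltP.
have [e He] := mpow_succ_order_comb n' B.
exists e => i j /ltP hi /ltP hj.
by rewrite rsum_big; exact: (He (Ordinal hi) (Ordinal hj)).
Qed.
End CayleyHamilton.

Lemma krylov_order_comb n B x : exists e : nat -> R, forall m,
  veq n (krylov n B x (m + n)) (fun i => rsum n (fun k => e k * krylov n B x (m + k) i)).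
Proof.
  destruct (CayleyHamilton.mpow_order_comb n B) as [e He]. exists e.
  assert (Hn : veq n (krylov n B x n) (fun i => rsum n (fun k => e k * krylov n B x k i))).
  { intros i Hi. unfold krylov, mapply.
    rewrite (rsum_ext n _ (fun l => rsum n (fun k => e k * mpow n B k i l * x l))).
    2:{ intros l Hl. rewrite He by assumption. rewrite Rmult_comm, <- rsum_mult_l.
        apply rsum_ext. intros; ring. }
    rewrite rsum_swap. apply rsum_ext. intros k _.
    rewrite <- rsum_mult_l. apply rsum_ext. intros; ring. }
  intros m i Hi. rewrite <- (mapply_mpow_krylov n B x m n i Hi).
  rewrite (mapply_veq n _ _ _ Hn), mapply_lincomb. apply rsum_ext. intros k _.
  now rewrite (mapply_mpow_krylov n B x m k i Hi).
Qed.

Lemma sing_of_sing_lt n F x :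
  (forall j, (j < n)%nat -> veq n (mapply n (ReM F) (krylov n (ImM F) x j)) vzero) ->
  sing n F x.
Proof.
  intros Hlt. destruct (krylov_order_comb n (ImM F) x) as [e He].
  assert (Hall : forall m j, (j < m)%nat ->
            veq n (mapply n (ReM F) (krylov n (ImM F) x j)) vzero).
  { induction m as [|m IH]; intros j Hj; [lia|].
    destruct (Nat.eq_dec j m) as [->|]; [|apply IH; lia].
    destruct (Nat.lt_ge_cases m n) as [|Hge]; [apply Hlt; assumption|].
    replace m with (m - n + n)%nat by lia. intros i Hi.
    rewrite (mapply_veq n _ _ _ (He (m - n)%nat)), mapply_lincomb.
    apply rsum_eq_0. intros k Hk. 
    change (fun j => krylov n (ImM F) x (m - n + k) j) with (krylov n (ImM F) x (m - n + k)).
    rewrite (IH (m - n + k)%nat ltac:(lia) i Hi). unfold vzero; cbv beta; ring. }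
  intros j. apply (Hall (S j)). lia.
Qed.

Lemma singS_iff_sing d Q x : singS d Q x <-> sing (2 * d) (Fmat d Q) x.
Proof.
  split.
  - intros H. apply sing_of_sing_lt. intros j Hj. unfold krylov.
    rewrite <- mapply_mmul. apply H, Hj.
  - intros H j Hj. unfold rker. rewrite mapply_mmul. apply H.
Qed.

Theorem mainTheorem9 (d : nat) (Q : CMat) (HQ : csym (2 * d) Q) :
  (forall t : R, 0 < t -> forall x : Vec,
     (singS d Q x <->
        (forall s : R, 0 <= s <= t ->
           rker (2 * d) (ImM (cexp (2 * d) (cscal 0 (2 * s) (Fmat d Q)))) x)) /\
     (singS d Q x <->
        (forall k : nat, (1 <= k)%nat ->
           rker (2 * d) (ImM (cpow (2 * d) (cscal 0 1 (Fmat d Q)) k)) x)))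
  /\
  (forall x : Vec, singS d Q x -> forall t : R,
     veq (2 * d)
       (mapply (2 * d) (ReM (cexp (2 * d) (cscal 0 (2 * t) (Fmat d Q)))) x)
       (mapply (2 * d) (rexp (2 * d) (mscal (-2 * t) (ImM (Fmat d Q)))) x) /\
     veq (2 * d)
       (mapply (2 * d) (ImM (cexp (2 * d) (cscal 0 (2 * t) (Fmat d Q)))) x)
       (fun _ => 0))
  /\
  (forall t : R, forall y : Vec,
     singS d Q y <->
     exists x : Vec, singS d Q x /\
       veq (2 * d) y (mapply (2 * d) (rexp (2 * d) (mscal (2 * t) (ImM (Fmat d Q)))) x)).
Proof.
  set (n := (2 * d)%nat). set (F := Fmat d Q).
  assert (HS : forall x, singS d Q x <-> sing n F x) by (intros; apply singS_iff_sing).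
  split; [|split].
  - intros t Ht x. rewrite HS. split; [split|].
    + intros Hx s _. apply (cexp_imul_apply_sing n F (2 * s) x Hx).
    + intros H. apply (sing_of_Im_cexp_imul n F (2 * t)); [lra|]. intros s Hs.
      replace s with (2 * (s / 2)) by field. apply H. lra.
    + apply sing_iff_Im_cpow_imul.
  - intros x Hx t. rewrite HS in Hx. replace (-2 * t) with (- (2 * t)) by ring.
    apply cexp_imul_apply_sing, Hx.
  - intros t y. rewrite HS. split.
    + intros Hy. exists (mapply n (rexp n (mscal (- (2 * t)) (ImM F))) y). rewrite HS. split.
      * apply sing_rexp_apply, Hy.
      * intros i Hi. symmetry. apply rexp_opp_apply, Hi.
    + intros [x [Hx Hy]]. rewrite HS in Hx.
      apply (sing_veq n F (mapply n (rexp n (mscal (2 * t) (ImM F))) x)).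
      * intros i Hi. symmetry. apply Hy, Hi.
      * apply sing_rexp_apply, Hx.
Qed.
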